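(* For every $n\in\mathbb{N}$ and every admissible $\Theta$: if $p$ is a projector over $A(\mathbb{R}^{2n}_\Theta)$, then all entries of $p$ are scalar multiples of the identity (i.e. $p$ is a projector over $\mathbb{C}$), and hence $K_0(A(\mathbb{R}^{2n}_\Theta))=K_0(\mathbb{C})\cong\mathbb{Z}$.
   Context: Let $\Theta=(\theta_{pq})_{1\leq p,q\leq 2n}$ be a real skew-symmetric matrix with $\theta_{2m-1,2m}=-\theta_{2m,2m-1}>0$ for $m=1,\dots,n$ and all other entries $0$. $A(\mathbb{R}^{2n}_\Theta)$ is the unital $*$-algebra generated by self-adjoint $x_1,\dots,x_{2n}$ with $[x_p,x_q]=-i\theta_{pq}$; every element is a finite sum $\sum a_{p_1,\dots,p_{2n}}x_1^{p_1}\cdots x_{2n}^{p_{2n}}$ with linearly independent ordered monomials. A projector over a $*$-algebra $A$ is a square matrix $p$ over $A$ with $p^2=p=p^*$; projectors $p,q$ are equivalent if $\mathrm{diag}(p,0)=u\,\mathrm{diag}(q,0)\,u^*$ for some unitary matrix $u$ over $A$; $K_0(A)$ is the Grothendieck group of equivalence classes under $p+q:=\mathrm{diag}(p,q)$. *)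

From HB Require Import structures.
From mathcomp Require Import all_boot all_algebra complex.
From mathcomp Require Import reals Rstruct.
Set Implicit Arguments. Unset Strict Implicit. Unset Printing Implicit Defensive.
Import GRing.Theory Num.Theory.
Local Open Scope ring_scope.
Local Open Scope complex_scope.

Definition RR := Rdefinitions.R.
Definition C := RR[i].

(* Paper (1-indexed): theta_{2m-1,2m} = - theta_{2m,2m-1} > 0, all other
   entries 0.  0-indexed: the pairs are (2m, 2m+1). *)
Definition admissible (n : nat) (th : 'M[RR]_(2 * n)) : Prop :=
  forall p q : 'I_(2 * n),
    ((~~ odd p) && (val q == (val p).+1) -> 0 < th p q /\ th q p = - th p q) /\
    ((val p)./2 != (val q)./2 -> th p q = 0) /\
    (p = q -> th p q = 0).

Section StarAlg.
Variable A : algType C.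

Definition is_involution (star : A -> A) : Prop :=
  [/\ forall a b, star (a + b) = star a + star b,
      forall a b, star (a * b) = star b * star a,
      forall a, star (star a) = a &
      forall (c : C) a, star (c *: a) = c^* *: star a].

Definition monomial (m : nat) (x : 'I_m -> A) (e : {ffun 'I_m -> nat}) : A :=
  \prod_(p < m) x p ^+ e p.

Definition ordered_monomial_basis (m : nat) (x : 'I_m -> A) : Prop :=
  (forall a : A, exists s : seq ({ffun 'I_m -> nat} * C),
       a = \sum_(ec <- s) ec.2 *: monomial x ec.1) /\
  (forall (s : seq {ffun 'I_m -> nat}) (c : {ffun 'I_m -> nat} -> C),
       uniq s -> \sum_(e <- s) c e *: monomial x e = 0 ->
       forall e, e \in s -> c e = 0).

(* A is (a presentation of) A(R^{2n}_Theta): self-adjoint generators with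
   [x_p, x_q] = -i theta_pq, and ordered monomials form a basis *)
Definition is_Moyal_algebra (n : nat) (th : 'M[RR]_(2 * n))
    (star : A -> A) (x : 'I_(2 * n) -> A) : Prop :=
  [/\ is_involution star,
      forall p, star (x p) = x p,
      forall p q, x p * x q - x q * x p = (- 'i * (th p q)%:C) *: 1 &
      ordered_monomial_basis x].

Variable star : A -> A.

Definition mx_star k (M : 'M[A]_k) : 'M[A]_k := (map_mx star M)^T.

Definition is_projector k (P : 'M[A]_k) : Prop :=
  P *m P = P /\ mx_star P = P.

Definition is_unitary k (U : 'M[A]_k) : Prop :=
  U *m mx_star U = 1%:M /\ mx_star U *m U = 1%:M.

(* diag(P, 0) of size N (for k <= N) *)
Definition pad k N (P : 'M[A]_k) : 'M[A]_N :=
  \matrix_(i < N, j < N)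
    match insub (val i) : option 'I_k, insub (val j) : option 'I_k with
    | Some i', Some j' => P i' j'
    | _, _ => 0
    end.

Definition proj_equiv k l (P : 'M[A]_k) (Q : 'M[A]_l) : Prop :=
  exists N (U : 'M[A]_N),
    [/\ (k <= N)%N, (l <= N)%N, is_unitary U & pad N P = U *m pad N Q *m mx_star U].

Definition dsum k l (P : 'M[A]_k) (Q : 'M[A]_l) : 'M[A]_(k + l) :=
  block_mx P 0 0 Q.

(* Grothendieck relation on formal differences [P] - [Q]:
   (P,Q) ~ (P',Q') iff P + Q' + R ~ P' + Q + R for some projector R *)
Definition K0_rel k l k' l' (P : 'M[A]_k) (Q : 'M[A]_l)
    (P' : 'M[A]_k') (Q' : 'M[A]_l') : Prop :=
  exists r (Rm : 'M[A]_r), is_projector Rm /\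
    proj_equiv (dsum (dsum P Q') Rm) (dsum (dsum P' Q) Rm).

(* K_0(A) (Grothendieck group of projector classes under diagonal sum,
   elements = classes of formal differences [P]-[Q]) is isomorphic to Z:
   there is f on projectors, additive for diag sums, such that
   [P]-[Q] |-> f P - f Q is well defined, injective and surjective onto int
   (it is then a group isomorphism K_0(A) -> Z). *)
Definition K0_iso_int : Prop :=
  exists f : forall k, 'M[A]_k -> int,
    [/\ (forall k l (P : 'M[A]_k) (Q : 'M[A]_l),
            is_projector P -> is_projector Q -> f _ (dsum P Q) = f _ P + f _ Q),
        (forall k l k' l' (P : 'M[A]_k) (Q : 'M[A]_l)
                (P' : 'M[A]_k') (Q' : 'M[A]_l'),
            is_projector P -> is_projector Q ->
            is_projector P' -> is_projector Q' ->
            (K0_rel P Q P' Q' <-> f _ P - f _ Q = f _ P' - f _ Q')) &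
        (forall z : int, exists k l (P : 'M[A]_k) (Q : 'M[A]_l),
            [/\ is_projector P, is_projector Q & f _ P - f _ Q = z])].

End StarAlg.

(* A(R^2n_Theta) is filtered by degree in the generators, and since the
   commutators [x_p, x_q] are scalars, a word in the generators equals the
   ordered monomial with the same letter counts up to lower degree.  Hence the
   top-degree part of a sum of hermitian squares [\sum_j a_j a_j^*] never
   cancels.  For a projector [P_ii = \sum_j P_ij P_ij^*], so descending
   induction on the degree shows that every entry of [P] is a scalar: the
   projectors over A are the orthogonal projections over C.  If two of them
   are unitarily equivalent over A, the partial isometry [U diag(Q, 0)]
   relating them is again scalar, so they have equal ranks; conversely equal
   ranks give unitary equivalence over C.  The rank therefore identifies
   K_0(A) with Z. *)

From Pilot Require Import Defs.
From HB Require Import structures.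
From mathcomp Require Import all_boot all_order all_algebra complex.
From mathcomp Require Import reals Rstruct.
From mathcomp Require Import zify ring spectral sesquilinear.
From Stdlib Require Import ClassicalEpsilon.
Set Implicit Arguments. Unset Strict Implicit. Unset Printing Implicit Defensive.
Import Order.TTheory GRing.Theory Num.Theory.
Local Open Scope ring_scope.

Section Span.
Variables (R : nzRingType) (A : algType R) (T : Type) (g : T -> A) (P : pred T).

Definition in_span (a : A) : Prop :=
  exists s : seq (T * R), all P (map fst s) /\ a = \sum_(tc <- s) tc.2 *: g tc.1.

Lemma in_span0 : in_span 0.
Proof. by exists [::]; rewrite big_nil. Qed.

Lemma in_spanD a b : in_span a -> in_span b -> in_span (a + b).
Proof.
move=> [s [Ps ->]] [t [Pt ->]]; exists (s ++ t).
by rewrite map_cat all_cat Ps Pt big_cat.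
Qed.

Lemma in_spanZ c a : in_span a -> in_span (c *: a).
Proof.
move=> [s [Ps ->]]; exists [seq (tc.1, c * tc.2) | tc <- s]; split.
  by rewrite -map_comp.
by rewrite big_map scaler_sumr; apply: eq_bigr => tc _; rewrite scalerA.
Qed.

Lemma in_spanB a b : in_span a -> in_span b -> in_span (a - b).
Proof. by move=> Sa /(in_spanZ (-1)); rewrite scaleN1r; apply: in_spanD. Qed.

Lemma in_span_gen t : P t -> in_span (g t).
Proof. by move=> Pt; exists [:: (t, 1)]; rewrite /= Pt big_seq1 scale1r. Qed.

Lemma in_span_sum (I : eqType) (r : seq I) (F : I -> A) :
  (forall i, i \in r -> in_span (F i)) -> in_span (\sum_(i <- r) F i).
Proof.
elim: r => [|i r IH] SF; first by rewrite big_nil; apply: in_span0.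
rewrite big_cons; apply: in_spanD; first by apply: SF; rewrite mem_head.
by apply: IH => j jr; apply: SF; rewrite inE jr orbT.
Qed.

Lemma in_span_ind (Q : A -> Prop) :
  Q 0 -> (forall c t b, P t -> Q b -> Q (c *: g t + b)) ->
  forall a, in_span a -> Q a.
Proof.
move=> Q0 QS a [s [Ps ->]]; elim: s Ps => [|tc s IH] /=; first by rewrite big_nil.
by case/andP=> Pt Ps; rewrite big_cons; apply: QS => //; apply: IH.
Qed.

End Span.

Section SpanTransport.
Variables (R : nzRingType) (A : algType R) (T T' : Type).
Variables (g : T -> A) (g' : T' -> A) (P : pred T) (P' : pred T').

Lemma in_span_sub (Q : pred T) a :
  (forall t, P t -> Q t) -> in_span g P a -> in_span g Q a.
Proof.
move=> PQ; elim/in_span_ind => [|c t b Pt Sb]; first exact: in_span0.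
by apply: in_spanD Sb; apply/in_spanZ/in_span_gen/PQ.
Qed.

Lemma in_span_trans a :
  (forall t, P t -> in_span g' P' (g t)) -> in_span g P a -> in_span g' P' a.
Proof.
move=> gP; elim/in_span_ind => [|c t b Pt Sb]; first exact: in_span0.
by apply: in_spanD Sb; apply/in_spanZ/gP.
Qed.

Lemma in_span_mull y a :
  (forall t, P t -> in_span g' P' (y * g t)) -> in_span g P a -> in_span g' P' (y * a).
Proof.
move=> gP; elim/in_span_ind => [|c t b Pt Sb]; first by rewrite mulr0; apply: in_span0.
by rewrite mulrDr -scalerAr; apply: in_spanD Sb; apply/in_spanZ/gP.
Qed.

Lemma in_span_mulr y a :
  (forall t, P t -> in_span g' P' (g t * y)) -> in_span g P a -> in_span g' P' (a * y).
Proof.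
move=> gP; elim/in_span_ind => [|c t b Pt Sb]; first by rewrite mul0r; apply: in_span0.
by rewrite mulrDl -scalerAl; apply: in_spanD Sb; apply/in_spanZ/gP.
Qed.

End SpanTransport.

Lemma sum_group_by_key (R : nzRingType) (V : lmodType R) (K : eqType)
    (F : K -> V) (t : seq (K * R)) (S : seq K) :
  uniq S -> {subset map fst t <= S} ->
  \sum_(kc <- t) kc.2 *: F kc.1 = \sum_(k <- S) (\sum_(kc <- t | kc.1 == k) kc.2) *: F k.
Proof.
move=> uS; elim: t => [|kc t IH] tS.
  by rewrite big_nil big1 // => k _; rewrite big_nil scale0r.
rewrite big_cons IH; last by move=> k kt; apply: tS; rewrite inE kt orbT.
have kcS : kc.1 \in S by apply: tS; rewrite mem_head.
rewrite [RHS](eq_bigr (fun k => (if kc.1 == k then kc.2 *: F k else 0) +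
   (\sum_(kc' <- t | kc'.1 == k) kc'.2) *: F k)); last first.
  move=> k _; rewrite big_cons; case: eqP => [<-|_]; last by rewrite add0r.
  by rewrite scalerDl.
rewrite big_split /=; congr (_ + _).
rewrite (bigD1_seq kc.1) //= eqxx big1_seq ?addr0 // => k /andP [nk _].
by rewrite eq_sym (negbTE nk).
Qed.

Section Exponents.
Variable m : nat.
Local Notation E := {ffun 'I_m -> nat}.

Definition wcount (w : seq 'I_m) : E := [ffun p => count_mem p w].
Definition mdeg (e : E) : nat := (\sum_(p < m) e p)%N.
Definition madd (e f : E) : E := [ffun p => (e p + f p)%N].
Definition sorted_word (e : E) : seq 'I_m :=
  flatten [seq nseq (e p) p | p <- index_enum 'I_m].
Definition sqnorm (e : E) : nat := (\sum_(p < m) e p * e p)%N.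

Lemma split_at_min (w : seq 'I_m) : w != [::] ->
  exists u1 a u2, w = u1 ++ a :: u2 /\ forall q, q \in w -> (a <= q)%N.
Proof.
elim: w => // b [|c w] IH _.
  by exists [::], b, [::]; split => // q; rewrite inE => /eqP ->.
have [u1 [a [u2 [-> a_min]]]] := IH isT.
have [ba|ab] := leqP b a.
  exists [::], b, (u1 ++ a :: u2); split => // q; rewrite inE => /orP [/eqP -> //|].
  by move/a_min; apply: leq_trans.
exists (b :: u1), a, u2; split => // q; rewrite inE => /orP [/eqP ->|/a_min //].
exact: ltnW.
Qed.

Lemma wcount_sorted_word e : wcount (sorted_word e) = e.
Proof.
apply/ffunP => p; rewrite ffunE count_flatten -map_comp sumnE big_map.
under eq_bigr do rewrite /= count_nseq.
by rewrite -/(\sum_(q < m) _)%N (bigD1 p) //= eqxx mul1n big1 ?addn0 // => q /negbTE ->.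
Qed.

Lemma mdeg_wcount w : mdeg (wcount w) = size w.
Proof.
rewrite /mdeg; elim: w => [|b w IH]; first by rewrite big1 // => p _; rewrite ffunE.
rewrite (eq_bigr (fun p => (b == p) + wcount w p)%N); last by move=> p _; rewrite !ffunE.
rewrite big_split /= IH (bigD1 b) //= eqxx big1 // => p /negbTE.
by rewrite eq_sym => ->.
Qed.

Lemma size_sorted_word e : size (sorted_word e) = mdeg e.
Proof. by rewrite -mdeg_wcount wcount_sorted_word. Qed.

Lemma mdeg_madd e f : mdeg (madd e f) = (mdeg e + mdeg f)%N.
Proof. by rewrite /mdeg -big_split; apply: eq_bigr => p _; rewrite ffunE. Qed.

Lemma sqnorm_midpoint (e f g : E) : madd e f = madd g g ->
  (sqnorm e <= sqnorm g)%N -> (sqnorm f <= sqnorm g)%N -> e = g.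
Proof.
move=> /ffunP efg le_eg le_fg.
have pt p : ((e p)%:Z - (g p)%:Z) ^+ 2 *+ 2 =
    (e p * e p)%:R + (f p * f p)%:R - (g p * g p)%:R *+ 2.
  have fE : (f p)%:Z = (g p)%:Z *+ 2 - (e p)%:Z.
    by have := congr1 Posz (efg p); rewrite !ffunE !PoszD mulr2n => <-; ring.
  by rewrite !natz !PoszM fE; ring.
have : \sum_(p < m) ((e p)%:Z - (g p)%:Z) ^+ 2 *+ 2 <= 0.
  rewrite (eq_bigr _ (fun p _ => pt p)) sumrB big_split sumrMnl /= -!natr_sum.
  by rewrite subr_le0 mulr2n lerD // ler_nat.
rewrite sumrMnl pmulrn_lle0 // => le0.
have /psumr_eq0P sq0 : \sum_(p < m) ((e p)%:Z - (g p)%:Z) ^+ 2 = 0.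
  by apply/eqP; rewrite eq_le le0 sumr_ge0 // => p _; rewrite sqr_ge0.
apply/ffunP => p; apply/eqP; rewrite -eqz_nat -subr_eq0 -sqrf_eq0.
by rewrite sq0 // => q _; rewrite sqr_ge0.
Qed.

End Exponents.

Lemma exists_argmax_seq (T : eqType) (s : seq T) (f : T -> nat) : s != [::] ->
  exists2 y, y \in s & forall z, z \in s -> (f z <= f y)%N.
Proof.
elim: s => // a [|b s] IH _.
  by exists a; rewrite ?mem_head // => z; rewrite inE => /eqP ->.
have [y ys y_max] := IH isT.
have [ay|ya] := leqP (f a) (f y).
  by exists y => [|z]; rewrite inE ?ys ?orbT // => /orP [/eqP ->|/y_max].
exists a => [|z]; first exact: mem_head.
by rewrite inE => /orP [/eqP -> //|/y_max fz]; apply: leq_trans fz (ltnW ya).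
Qed.

Section Involution.
Variables (A : algType C) (star : A -> A).
Hypothesis invol : is_involution star.

Lemma starD a b : star (a + b) = star a + star b.
Proof. by case: invol. Qed.

Lemma starM a b : star (a * b) = star b * star a.
Proof. by case: invol. Qed.

Lemma starK a : star (star a) = a.
Proof. by case: invol. Qed.

Lemma starZ (c : C) a : star (c *: a) = c^* *: star a.
Proof. by case: invol. Qed.

Lemma star0 : star 0 = 0.
Proof. by apply: (addrI (star 0)); rewrite -starD !addr0. Qed.

Lemma star1 : star 1 = 1.
Proof. by have := starM (star 1) 1; rewrite mulr1 !starK mulr1 => /esym. Qed.

Lemma star_sum (I : Type) (r : seq I) (F : I -> A) :
  star (\sum_(i <- r) F i) = \sum_(i <- r) star (F i).
Proof.
elim: r => [|i r IH]; first by rewrite !big_nil star0.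
by rewrite !big_cons starD IH.
Qed.

Lemma star_alg (c : C) : star c%:A = (c^*)%:A.
Proof. by rewrite starZ star1. Qed.

End Involution.

Local Open Scope sesquilinear_scope.

Section OrthogonalProjections.
Context {F : numClosedFieldType}.

Definition is_orthoproj n (G : 'M[F]_n) := G *m G = G /\ G ^t* = G.

Lemma trmxC_mul m n p (X : 'M[F]_(m, n)) (Y : 'M[F]_(n, p)) :
  (X *m Y) ^t* = Y ^t* *m X ^t*.
Proof. by rewrite trmx_mul map_mxM. Qed.

Lemma orthoproj_eq n (G H : 'M[F]_n) : is_orthoproj G -> is_orthoproj H ->
  (G <= H)%MS -> (H <= G)%MS -> G = H.
Proof.
move=> [GG Gh] [HH Hh] /submxP [X GX] /submxP [Y HY].
have GHG : G *m H = G by rewrite GX -mulmxA HH.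
have HGH : H *m G = H by rewrite HY -mulmxA GG.
by rewrite -Gh -GHG trmxC_mul Gh Hh HGH.
Qed.

(* The rows of [schmidt_complete G] are an orthonormal basis of the range of
   [G] completed to one of the whole space. *)
Lemma orthoproj_unitary_diag N (G : 'M[F]_N) : is_orthoproj G ->
  exists q (S : 'M[F]_(\rank G + q, N)),
    [/\ S \is unitarymx, (\rank G + q = N)%N & G = S ^t* *m block_mx 1%:M 0 0 0 *m S].
Proof.
move=> G_proj; exists _, (schmidt_complete G); split.
- exact: schmidt_complete_unitarymx.
- exact: add_rank_ortho.
rewrite /schmidt_complete tr_col_mx map_row_mx mul_row_block !mulmx0 mulmx1 !addr0.
rewrite mul_row_col mul0mx addr0.
set B := schmidt (row_base G).
have BB : B *m B ^t* = 1%:M by apply/unitarymxP/schmidt_unitarymx/rank_leq_col.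
have BG : (B :=: G)%MS.
  exact: eqmx_trans (eqmx_schmidt_free (row_base_free G)) (eq_row_base G).
symmetry; apply: orthoproj_eq => //.
- split; first by rewrite mulmxA -[B ^t* *m B *m B ^t*]mulmxA BB mulmx1.
  by rewrite trmxC_mul trmxCK.
- by rewrite -BG submxMl.
have BBB : B *m (B ^t* *m B) = B by rewrite mulmxA BB mul1mx.
by rewrite -BG -{1}BBB submxMl.
Qed.

Lemma orthoproj_unitary_conj N (G H : 'M[F]_N) : is_orthoproj G -> is_orthoproj H ->
  \rank G = \rank H -> exists2 W : 'M[F]_N, W \is unitarymx & G = W *m H *m W ^t*.
Proof.
move=> G_proj H_proj rGH.
have [q [S [S_u qG SG]]] := orthoproj_unitary_diag G_proj.
have [q' [T [T_u qH TH]]] := orthoproj_unitary_diag H_proj.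
move: S T S_u T_u qG qH SG TH; rewrite -rGH; move: (\rank G) => r.
move=> S T S_u T_u qG qH SG TH.
have qq' : q = q' by apply/eqP; rewrite -(eqn_add2l r) qG qH.
case: q' / qq' in T T_u qH TH *; subst N.
exists (S ^t* *m T); first by rewrite mul_unitarymx // trmxC_unitary.
rewrite SG TH trmxC_mul trmxCK !mulmxA -[_ *m T *m T ^t*]mulmxA.
rewrite (unitarymxP T_u) mulmx1 -[S ^t* *m T *m T ^t*]mulmxA (unitarymxP T_u) mulmx1.
by rewrite -!mulmxA.
Qed.

Definition embed_mx N k : 'M[F]_(N, k) := \matrix_(i, j) (val i == val j)%:R.

Lemma embed_mxE N k p (M : 'M[F]_(k, p)) i b :
  (embed_mx N k *m M) i b = if insub (val i) is Some i' then M i' b else 0.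
Proof.
rewrite mxE; case: insubP => [i' _ vi|ni].
  rewrite (bigD1 i') //= mxE vi eqxx mul1r big1 ?addr0 // => a ne.
  rewrite mxE; case: eqP => [e|]; last by rewrite mul0r.
  by case/negP: ne; apply/eqP/val_inj; rewrite vi e.
rewrite big1 // => a _; rewrite mxE; case: eqP => [e|]; rewrite ?mul0r //.
by case/negP: ni; rewrite e ltn_ord.
Qed.

Lemma conj_embed_mx N k : map_mx Num.conj (embed_mx N k) = embed_mx N k.
Proof. by apply/matrixP => i j; rewrite !mxE conjC_nat. Qed.

Lemma embed_mxK N k : (k <= N)%N -> (embed_mx N k)^T *m embed_mx N k = 1%:M.
Proof.
move=> kN; apply/matrixP => i j; rewrite !mxE (bigD1 (widen_ord kN i)) //= !mxE eqxx mul1r.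
rewrite big1 ?addr0 => [|a ne]; first by rewrite -val_eqE.
by rewrite !mxE; case: eqP => [e|]; rewrite ?mul0r //; case/negP: ne; apply/eqP/val_inj.
Qed.

Definition pad_mx N k (G : 'M[F]_k) : 'M[F]_N := embed_mx N k *m G *m (embed_mx N k)^T.

Lemma pad_mx_orthoproj N k (G : 'M[F]_k) : (k <= N)%N ->
  is_orthoproj G -> is_orthoproj (pad_mx N G).
Proof.
move=> kN [GG Gh]; split.
  rewrite /pad_mx !mulmxA -[_ *m G *m _ *m _]mulmxA embed_mxK // mulmx1.
  by rewrite -[_ *m G *m G]mulmxA GG.
by rewrite /pad_mx !trmxC_mul Gh trmxK -map_trmx conj_embed_mx mulmxA.
Qed.

Lemma mxrank_pad_mx N k (G : 'M[F]_k) : (k <= N)%N -> \rank (pad_mx N G) = \rank G.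
Proof.
move=> kN; apply/eqP; rewrite eqn_leq /pad_mx (leq_trans (mxrankM_maxl _ _)) ?mxrankM_maxr //=.
have {1}-> : G = (embed_mx N k)^T *m pad_mx N G *m embed_mx N k.
  by rewrite /pad_mx !mulmxA embed_mxK // mul1mx -mulmxA embed_mxK // mulmx1.
by rewrite (leq_trans (mxrankM_maxl _ _)) // mxrankM_maxr.
Qed.

Lemma block_orthoproj k l (G : 'M[F]_k) (H : 'M[F]_l) :
  is_orthoproj G -> is_orthoproj H -> is_orthoproj (block_mx G 0 0 H).
Proof.
move=> [GG Gh] [HH Hh]; split.
  by rewrite mulmx_block !mulmx0 !mul0mx !addr0 !add0r GG HH.
by rewrite tr_block_mx map_block_mx Gh Hh !trmx0 !map_mx0.
Qed.

Lemma orthoproj0 n : is_orthoproj (0 : 'M[F]_n).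
Proof. by split; rewrite ?mulmx0 // trmx0 map_mx0. Qed.

Lemma orthoproj1 n : is_orthoproj (1%:M : 'M[F]_n).
Proof. by split; rewrite ?mulmx1 // trmx1 map_mx1. Qed.

End OrthogonalProjections.

Lemma mxrank_partial_isometry (F : fieldType) N (W W' G H : 'M[F]_N) :
  W *m W' = G -> G *m W = W -> W' *m W = H -> W *m H = W -> \rank G = \rank H.
Proof.
move=> WW' GW W'W WH.
have -> : \rank G = \rank W.
  by apply/eqP; rewrite eqn_leq -{1}WW' mxrankM_maxl -{1}GW mxrankM_maxl.
by apply/eqP; rewrite eqn_leq -{1}WH mxrankM_maxr -{1}W'W mxrankM_maxr.
Qed.

Section Presentation.
Variables (A : algType C) (m : nat) (x : 'I_m -> A) (gam : 'I_m -> 'I_m -> C).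
Variable star : A -> A.
Hypothesis comm : forall p q, x p * x q - x q * x p = gam p q *: 1.
Hypotheses (invol : is_involution star) (x_sa : forall p, star (x p) = x p).
Hypothesis basis : ordered_monomial_basis x.

Local Notation mon := (monomial x).
Local Notation E := {ffun 'I_m -> nat}.
Local Notation mx_star := (mx_star star).
Local Notation alg_mx := (map_mx (in_alg A)).

Definition expansion (a : A) (s : seq (E * C)) := a = \sum_(ec <- s) ec.2 *: mon ec.1.

Definition mcoef (a : A) (e : E) : C :=
  \sum_(ec <- epsilon (inhabits [::]) (expansion a) | ec.1 == e) ec.2.

Definition const_coef (a : A) : C := mcoef a [ffun => 0%N].

Lemma expansion_exists a : exists s, expansion a s.
Proof. exact: basis.1. Qed.

Lemma expansion0_coef s e : expansion 0 s -> \sum_(ec <- s | ec.1 == e) ec.2 = 0.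
Proof.
move=> s0; have uS : uniq (undup (map fst s)) := undup_uniq _.
have sS : {subset map fst s <= undup (map fst s)} by move=> f; rewrite mem_undup.
move: s0; rewrite /expansion (sum_group_by_key mon uS sS) => /esym s0.
have [eS|eNS] := boolP (e \in undup (map fst s)); first exact: basis.2 _ _ uS s0 e eS.
rewrite big_seq_cond big1 // => ec /andP [ecs /eqP ece]; case/negP: eNS.
by rewrite mem_undup -ece map_f.
Qed.

Lemma mcoefE a s : expansion a s -> forall e, mcoef a e = \sum_(ec <- s | ec.1 == e) ec.2.
Proof.
move=> sa e; have := epsilon_spec (inhabits [::]) (expansion a) (ex_intro _ s sa).
rewrite /mcoef; set s0 := epsilon _ _ => s0a.
have : expansion 0 (s0 ++ [seq (ec.1, - ec.2) | ec <- s]).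
  rewrite /expansion big_cat big_map /= -s0a.
  by under eq_bigr do rewrite scaleNr; rewrite sumrN -sa subrr.
move/(expansion0_coef e); rewrite big_cat big_map sumrN /=.
by move/eqP; rewrite subr_eq0 => /eqP.
Qed.

Lemma mcoefD a b e : mcoef (a + b) e = mcoef a e + mcoef b e.
Proof.
have [s sa] := expansion_exists a; have [t tb] := expansion_exists b.
have stab : expansion (a + b) (s ++ t) by rewrite /expansion big_cat -sa -tb.
by rewrite (mcoefE stab) (mcoefE sa) (mcoefE tb) big_cat.
Qed.

Lemma mcoefZ c a e : mcoef (c *: a) e = c * mcoef a e.
Proof.
have [s sa] := expansion_exists a.
have csa : expansion (c *: a) [seq (ec.1, c * ec.2) | ec <- s].
  by rewrite /expansion big_map sa scaler_sumr; apply: eq_bigr => ec _; rewrite scalerA.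
by rewrite (mcoefE csa) (mcoefE sa) big_map mulr_sumr.
Qed.

Lemma mcoef0 e : mcoef 0 e = 0.
Proof. by rewrite -(scale0r 0) mcoefZ mul0r. Qed.

Lemma mcoef_sum (I : Type) (r : seq I) (F : I -> A) e :
  mcoef (\sum_(i <- r) F i) e = \sum_(i <- r) mcoef (F i) e.
Proof.
elim: r => [|i r IH]; first by rewrite !big_nil mcoef0.
by rewrite !big_cons mcoefD IH.
Qed.

Lemma mcoef_monomial f e : mcoef (mon f) e = (f == e)%:R.
Proof.
have fs : expansion (mon f) [:: (f, 1)] by rewrite /expansion big_seq1 scale1r.
by rewrite (mcoefE fs) big_cons big_nil /=; case: eqP; rewrite ?addr0.
Qed.

Lemma expansion_mcoef a s S : expansion a s -> uniq S -> {subset map fst s <= S} ->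
  a = \sum_(e <- S) mcoef a e *: mon e.
Proof.
move=> sa uS sS; rewrite {1}sa (sum_group_by_key mon uS sS).
by apply: eq_bigr => e _; rewrite (mcoefE sa).
Qed.

Definition wprod (w : seq 'I_m) : A := \prod_(i <- w) x i.

Definition deg_le (d : nat) : A -> Prop := in_span mon (fun e => mdeg e <= d)%N.
Definition word_span (k : nat) : A -> Prop := in_span wprod (fun w => size w == k).

Lemma wprod_cat u v : wprod (u ++ v) = wprod u * wprod v.
Proof. exact: big_cat. Qed.

Lemma wprod_cons a u : wprod (a :: u) = x a * wprod u.
Proof. exact: big_cons. Qed.

Lemma wprod_nil : wprod [::] = 1.
Proof. exact: big_nil. Qed.

Lemma monomial_sorted_word e : mon e = wprod (sorted_word e).
Proof.
rewrite /wprod /sorted_word big_flatten big_map; apply: eq_bigr => p _.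
by elim: (e p) => [|k IH]; rewrite ?expr0 ?big_nil // exprS IH big_cons.
Qed.

Lemma monomial0 : mon [ffun => 0%N] = 1.
Proof. by rewrite /monomial big1 // => p _; rewrite ffunE. Qed.

Lemma monomial_wcount_cons (a : 'I_m) (v : seq 'I_m) : (forall q, q \in v -> (a <= q)%N) ->
  x a * mon (wcount v) = mon (wcount (a :: v)).
Proof.
move=> a_min; pose G (f : E) (i : nat) := if insub i is Some p then x p ^+ f p else 1.
have GE f : mon f = \prod_(0 <= i < m) G f i.
  by rewrite big_mkord /monomial; apply: eq_bigr => p _; rewrite /G valK.
have splitG f : \prod_(0 <= i < m) G f i =
    \prod_(0 <= i < a) G f i * (G f a * \prod_(a.+1 <= i < m) G f i).
  rewrite (@big_cat_nat _ _ _ a 0 m _ _ (leq0n a) (ltnW (ltn_ord a))) /=.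
  by rewrite (big_ltn (ltn_ord a)).
have below (w : seq 'I_m) : (forall q, q \in w -> (a <= q)%N) ->
    \prod_(0 <= i < a) G (wcount w) i = 1.
  move=> w_min; rewrite big_nat big1 // => i /andP [_ ia].
  rewrite /G insubT ?(ltn_trans ia) // => Hi /=; rewrite ffunE.
  suff /count_memPn -> : Sub i Hi \notin w by rewrite expr0.
  by apply/negP => /w_min; rewrite leqNgt ia.
have Ga f : G f a = x a ^+ f a by rewrite /G valK.
rewrite !GE !splitG !below // => [|q]; last by rewrite inE => /orP [/eqP ->|/a_min].
rewrite !mul1r !Ga !ffunE /= eqxx add1n exprS mulrA; congr (_ * _).
apply: eq_big_nat => i /andP [ai _]; rewrite /G.
case: insubP => // p _ vp; rewrite !ffunE /=.
by case: eqP => [pa|//]; move: ai; rewrite -vp pa ltnn.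
Qed.

Lemma deg_le_sub d d' a : (d <= d')%N -> deg_le d a -> deg_le d' a.
Proof. by move=> dd'; apply: in_span_sub => e /leq_trans; apply. Qed.

Lemma commutator_wprod a u : word_span (size u).-1 (x a * wprod u - wprod u * x a).
Proof.
elim: u => [|b u IH]; first by rewrite wprod_nil mulr1 mul1r subrr; apply: in_span0.
rewrite wprod_cons.
have -> : x a * (x b * wprod u) - x b * wprod u * x a =
    (x a * x b - x b * x a) * wprod u + x b * (x a * wprod u - wprod u * x a).
  by rewrite mulrBl mulrBr !mulrA addrA subrK.
rewrite comm -scalerAl mul1r; apply: in_spanD; first exact/in_spanZ/in_span_gen.
case: u IH => [|c u] IH; first by rewrite wprod_nil mulr1 mul1r subrr mulr0; apply: in_span0.
apply: in_span_mull IH => v /eqP sv; rewrite -wprod_cons.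
by apply: in_span_gen; rewrite /= sv.
Qed.

Lemma deg_le_wprod_of_straight w :
  deg_le (size w).-1 (wprod w - mon (wcount w)) -> deg_le (size w) (wprod w).
Proof.
move=> sw; rewrite -(subrK (mon (wcount w)) (wprod w)); apply: in_spanD.
  exact: deg_le_sub (leq_pred _) sw.
by apply: in_span_gen; rewrite mdeg_wcount.
Qed.

(* Moving the minimal letter [a] to the front costs the commutator of [x a]
   with the prefix, which has lower degree by the commutation relations. *)
Lemma wprod_straight_step (u1 u2 : seq 'I_m) (a : 'I_m) (k := size (u1 ++ u2)) :
  (0 < k)%N -> (forall q, q \in u1 ++ u2 -> (a <= q)%N) ->
  (forall v, size v <= k -> deg_le (size v) (wprod v))%N ->
  deg_le k.-1 (wprod (u1 ++ u2) - mon (wcount (u1 ++ u2))) ->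
  deg_le k (wprod (u1 ++ a :: u2) - mon (wcount (u1 ++ a :: u2))).
Proof.
move=> k_gt0 a_min short straight.
pose K := x a * wprod u1 - wprod u1 * x a.
have -> : mon (wcount (u1 ++ a :: u2)) = x a * mon (wcount (u1 ++ u2)).
  rewrite monomial_wcount_cons //; congr mon; apply/ffunP => p.
  by rewrite !ffunE /= !count_cat /= addnCA.
have -> : wprod (u1 ++ a :: u2) - x a * mon (wcount (u1 ++ u2)) =
    x a * (wprod (u1 ++ u2) - mon (wcount (u1 ++ u2))) - K * wprod u2.
  rewrite !wprod_cat wprod_cons /K mulrBr mulrBl !mulrA.
  by apply/esym; rewrite opprB addrC addrA addrNK.
apply: in_spanB.
  apply: in_span_mull straight => e de; rewrite monomial_sorted_word -wprod_cons.
  by apply: deg_le_sub (short _ _); rewrite /= size_sorted_word; lia.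
apply: (@deg_le_sub ((size u1).-1 + size u2)); first by rewrite /k size_cat; lia.
have KW : word_span ((size u1).-1 + size u2) (K * wprod u2).
  apply: in_span_mulr (commutator_wprod a u1) => v /eqP sv.
  by rewrite -wprod_cat; apply: in_span_gen; rewrite size_cat sv.
apply: in_span_trans KW => v /eqP sv; rewrite -sv.
by apply: short; rewrite sv /k size_cat; lia.
Qed.

Lemma wprod_straight w : deg_le (size w).-1 (wprod w - mon (wcount w)).
Proof.
move: {2}(size w) (leqnn (size w)) => n; elim: n w => [|n IH] w.
  rewrite leqn0 => /nilP ->; rewrite wprod_nil monomial0 subrr.
  exact: in_span0.
rewrite leq_eqVlt ltnS => /orP [/eqP sw|]; last exact: IH.
case: n IH sw => [|n] IH sw.
  case: w sw => [|a [|//]] // _.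
  rewrite -monomial_wcount_cons // monomial0 wprod_cons wprod_nil subrr.
  exact: in_span0.
have wn : w != [::] by case: w sw.
have [u1 [a [u2 [Ew a_min]]]] := split_at_min wn.
have su : size (u1 ++ u2) = n.+1 by move: sw; rewrite Ew !size_cat /= addnS => -[].
rewrite sw Ew /= -su; apply: wprod_straight_step.
- by rewrite su.
- move=> q; rewrite mem_cat => qu; apply: a_min.
  by rewrite Ew mem_cat inE; case/orP: qu => ->; rewrite ?orbT.
- by move=> v sv; apply: deg_le_wprod_of_straight; apply: IH; rewrite -su.
by apply: IH; rewrite su.
Qed.

Lemma star_wprod w : star (wprod w) = wprod (rev w).
Proof.
elim: w => [|b w IH]; first by rewrite wprod_nil (star1 invol).
rewrite wprod_cons (starM invol) IH x_sa rev_cons -cats1 wprod_cat.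
by rewrite wprod_cons wprod_nil mulr1.
Qed.

(* Since [star] reverses words, [mon e * star (mon f)] is a word with letter
   counts [madd e f]; straightening it gives the leading term. *)
Lemma monomial_mul_star e f :
  deg_le (mdeg e + mdeg f).-1 (mon e * star (mon f) - mon (madd e f)).
Proof.
have := wprod_straight (sorted_word e ++ rev (sorted_word f)).
have -> : wcount (sorted_word e ++ rev (sorted_word f)) = madd e f.
  apply/ffunP => p; rewrite !ffunE count_cat count_rev.
  by rewrite -!(ffunE (fun p => count_mem p _)) -!/(wcount _) !wcount_sorted_word.
by rewrite size_cat size_rev !size_sorted_word wprod_cat -star_wprod -!monomial_sorted_word.
Qed.

Lemma mcoef_deg_le d a g : deg_le d a -> (d < mdeg g)%N -> mcoef a g = 0.
Proof.
move=> [s [s_deg sa]] dg; rewrite (mcoefE sa) big1_seq // => ec /andP [/eqP ecg ecs].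
by have := allP s_deg _ (map_f fst ecs); rewrite /= ecg leqNgt dg.
Qed.

Lemma mcoef_monomial_mul_star e f g : (0 < mdeg g)%N -> (mdeg e + mdeg f <= mdeg g)%N ->
  mcoef (mon e * star (mon f)) g = (madd e f == g)%:R.
Proof.
move=> g_gt0 efg; rewrite -(subrK (mon (madd e f)) (mon e * star (mon f))).
by rewrite mcoefD mcoef_monomial (mcoef_deg_le (monomial_mul_star e f)) ?add0r //; lia.
Qed.

Lemma common_expansion k (a : 'I_k -> A) d : (forall j, deg_le d (a j)) ->
  exists2 S : seq E, uniq S /\ (forall e, e \in S -> mdeg e <= d)%N &
    forall j, a j = \sum_(e <- S) mcoef (a j) e *: mon e.
Proof.
move=> a_deg.
have [s s_a] : exists s : 'I_k -> seq (E * C),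
    forall j, all (fun e => mdeg e <= d)%N (map fst (s j)) /\ expansion (a j) (s j).
  apply: (@fin_all_exists _ (fun _ => seq (E * C))
    (fun j t => all (fun e => mdeg e <= d)%N (map fst t) /\ expansion (a j) t)) => j.
  by have [t [t_deg ta]] := a_deg j; exists t.
pose S := undup (flatten [seq map fst (s j) | j <- enum 'I_k]).
have sS j : {subset map fst (s j) <= S}.
  move=> e es; rewrite mem_undup; apply/flattenP; exists (map fst (s j)) => //.
  by apply: map_f; rewrite mem_enum.
exists S; first split; first exact: undup_uniq.
  move=> e; rewrite mem_undup => /flattenP [_ /mapP [j _ ->] es].
  exact: (allP (s_a j).1 _ es).
by move=> j; apply: (expansion_mcoef (s_a j).2 (undup_uniq _) (sS j)).
Qed.

Section LeadingCoefficient.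
Variables (k d : nat) (a : 'I_k -> A) (S : seq E) (es : E).
Hypotheses (d_gt0 : (0 < d)%N) (S_uniq : uniq S).
Hypothesis S_deg : forall e, e \in S -> (mdeg e <= d)%N.
Hypothesis a_exp : forall j, a j = \sum_(e <- S) mcoef (a j) e *: mon e.
Hypotheses (es_S : es \in S) (es_deg : mdeg es = d).
Hypothesis es_max : forall j e, e \in S -> mdeg e = d -> mcoef (a j) e != 0 ->
  (sqnorm e <= sqnorm es)%N.

(* Two exponents of top degree averaging to [es] must both equal [es], by
   maximality of [sqnorm es] and strict convexity of [sqnorm]. *)
Lemma mcoef_hsq_term j e f : e \in S -> f \in S ->
  mcoef (a j) e * (mcoef (a j) f)^* * mcoef (mon e * star (mon f)) (madd es es) =
  if (e == es) && (f == es) then mcoef (a j) es * (mcoef (a j) es)^* else 0.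
Proof.
move=> eS fS; have deg2 : mdeg (madd es es) = (d + d)%N by rewrite mdeg_madd es_deg.
have [e_deg f_deg] := (S_deg eS, S_deg fS).
rewrite mcoef_monomial_mul_star ?deg2; [|lia|lia].
case: (boolP ((e == es) && (f == es))) => [/andP [/eqP -> /eqP ->]|not_es].
  by rewrite eqxx mulr1.
have [ce|ce] := eqVneq (mcoef (a j) e) 0; first by rewrite ce !mul0r.
have [cf|cf] := eqVneq (mcoef (a j) f) 0; first by rewrite cf conjC0 mulr0 mul0r.
have [ef|] := eqVneq (madd e f) (madd es es); last by rewrite mulr0.
have /eqP : mdeg (madd e f) = (d + d)%N by rewrite ef deg2.
rewrite mdeg_madd => /eqP sum_deg.
have e_top : mdeg e = d by lia.
have f_top : mdeg f = d by lia.
have fe : madd f e = madd es es by rewrite -ef; apply/ffunP => p; rewrite !ffunE addnC.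
have e_es := sqnorm_midpoint ef (es_max eS e_top ce) (es_max fS f_top cf).
have f_es := sqnorm_midpoint fe (es_max fS f_top cf) (es_max eS e_top ce).
by case/negP: not_es; rewrite e_es f_es eqxx.
Qed.

Lemma mcoef_sum_hsq :
  mcoef (\sum_j a j * star (a j)) (madd es es) =
  \sum_j mcoef (a j) es * (mcoef (a j) es)^*.
Proof.
rewrite mcoef_sum; apply: eq_bigr => j _.
rewrite {1 2}(a_exp j) (star_sum invol) mulr_suml mcoef_sum.
rewrite (eq_big_seq (fun e => if e == es then mcoef (a j) es * (mcoef (a j) es)^* else 0)).
  by rewrite -big_mkcond -big_filter filter_pred1_uniq // big_seq1.
move=> e eS; rewrite mulr_sumr mcoef_sum.
rewrite (eq_big_seq (fun f => if (e == es) && (f == es) then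
    mcoef (a j) es * (mcoef (a j) es)^* else 0)); last first.
  move=> f fS; rewrite (starZ invol) -scalerAl -scalerAr scalerA !mcoefZ.
  exact: mcoef_hsq_term.
case: eqP => _ /=; last by rewrite big1.
by rewrite -big_mkcond -big_filter filter_pred1_uniq // big_seq1.
Qed.

End LeadingCoefficient.

(* The top-degree part of [\sum_j a j * star (a j)] cannot cancel: at the
   exponent [es + es], with [es] a top exponent of maximal [sqnorm], its
   coefficient is [\sum_j |mcoef (a j) es|^2 > 0]. *)
Lemma deg_le_pred_of_sum_hsq k (a : 'I_k -> A) d : (0 < d)%N ->
  (forall j, deg_le d (a j)) -> deg_le (d + d).-1 (\sum_j a j * star (a j)) ->
  forall j, deg_le d.-1 (a j).
Proof.
move=> d_gt0 a_deg hsq_deg.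
have [S [S_uniq S_deg] a_exp] := common_expansion a_deg.
pose top := [seq e <- S | (mdeg e == d) && [exists j, mcoef (a j) e != 0]].
have [top0 j|] := eqVneq top [::].
  rewrite a_exp; apply: in_span_sum => e eS.
  have [ce|ce] := eqVneq (mcoef (a j) e) 0; first by rewrite ce scale0r; apply: in_span0.
  apply/in_spanZ/in_span_gen; have /S_deg := eS.
  rewrite leq_eqVlt => /orP [/eqP ed|]; last by lia.
  have : e \in top by rewrite mem_filter eS ed eqxx andbT; apply/existsP; exists j.
  by rewrite top0.
move=> /(exists_argmax_seq (@sqnorm m)) [es].
rewrite mem_filter => /andP [/andP [/eqP es_deg /existsP [j0 c_es]] es_S] es_max.
have es2_deg : ((d + d).-1 < mdeg (madd es es))%N by rewrite mdeg_madd es_deg; lia.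
have := mcoef_deg_le hsq_deg es2_deg.
rewrite (mcoef_sum_hsq d_gt0 S_uniq S_deg a_exp es_S es_deg); last first.
  move=> j e eS e_deg ce; apply: es_max.
  by rewrite mem_filter eS e_deg eqxx andbT; apply/existsP; exists j.
move/psumr_eq0P => /(_ (fun j _ => mul_conjC_ge0 _) j0 isT) /eqP.
by rewrite mul_conjC_eq0 (negbTE c_es).
Qed.

Lemma deg_le0_scalar a : deg_le 0 a -> a = (const_coef a)%:A.
Proof.
move=> [s [s_deg sa]].
have s0 e : e \in map fst s -> e = [ffun => 0%N].
  move=> /(allP s_deg); rewrite leqn0 /mdeg sum_nat_eq0 => /forallP e0.
  by apply/ffunP => p; rewrite ffunE; apply/eqP/(implyP (e0 p)).
rewrite /const_coef (mcoefE sa) {1}sa -monomial0 scaler_suml big_seq [RHS]big_seq_cond.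
apply: eq_big => [ec|ec ecs]; last by rewrite (s0 _ (map_f _ ecs)).
by case ecs: (ec \in s); rewrite //= (s0 _ (map_f _ ecs)) eqxx.
Qed.

Lemma deg_le_alg d c : deg_le d c%:A.
Proof.
rewrite -monomial0; apply/in_spanZ/in_span_gen.
by rewrite /mdeg big1 // => p _; rewrite ffunE.
Qed.

Lemma deg_le_exists a : exists d, deg_le d a.
Proof.
have [s sa] := expansion_exists a.
suff [d s_deg] : exists d, all (fun e => mdeg e <= d)%N (map fst s) by exists d, s.
elim: s {sa} => [|ec s [d s_deg]]; first by exists 0%N.
exists (maxn (mdeg ec.1) d); rewrite /= leq_maxl.
by apply: sub_all s_deg => e /leq_trans; apply; rewrite leq_maxr.
Qed.

Lemma deg_le_uniform k (a : 'I_k -> A) : exists d, forall j, deg_le d (a j).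
Proof.
have [ds ds_a] : exists ds : 'I_k -> nat, forall j, deg_le (ds j) (a j).
  apply: (@fin_all_exists _ (fun _ => nat) (fun j d => deg_le d (a j))) => j.
  exact: deg_le_exists.
by exists (\max_j ds j) => j; apply: deg_le_sub (ds_a j); apply: leq_bigmax.
Qed.

(* The hypothesis holds when [\sum_j V i j * star (V i j)] is a diagonal
   entry of [V] itself (projectors) or a scalar (partial isometries with
   scalar range projection). *)
Lemma entries_deg_le0_of_row_hsq k l (V : 'M[A]_(k, l)) :
  (forall i d, (forall j, deg_le d (V i j)) -> deg_le d (\sum_j V i j * star (V i j))) ->
  forall i j, deg_le 0 (V i j).
Proof.
move=> V_hsq i; have [d] := deg_le_uniform (V i).
elim: d => [//|d IH] V_deg; apply: IH.
apply: (deg_le_pred_of_sum_hsq (ltn0Sn d) V_deg).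
by apply: deg_le_sub (V_hsq i _ V_deg); lia.
Qed.

Lemma projector_entries_deg_le0 k (P : 'M[A]_k) : is_projector star P ->
  forall i j, deg_le 0 (P i j).
Proof.
move=> [PP PS]; apply: entries_deg_le0_of_row_hsq => i d P_deg.
have <- : P i i = \sum_j P i j * star (P i j).
  by rewrite -{1}PP -{2}PS !mxE; apply: eq_bigr => j _; rewrite !mxE.
exact: P_deg.
Qed.

Lemma const_coef_alg c : const_coef c%:A = c.
Proof.
by rewrite /const_coef -monomial0 mcoefZ mcoef_monomial eqxx mulr1.
Qed.

Lemma alg_mxK k l (M : 'M[C]_(k, l)) : map_mx const_coef (alg_mx M) = M.
Proof. by apply/matrixP => i j; rewrite !mxE const_coef_alg. Qed.

Lemma alg_mx_inj k l : injective (alg_mx : 'M[C]_(k, l) -> 'M[A]_(k, l)).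
Proof. exact: can_inj (@alg_mxK k l). Qed.

Lemma mx_star_alg k (M : 'M[C]_k) : mx_star (alg_mx M) = alg_mx (M ^t*).
Proof. by apply/matrixP => i j; rewrite !mxE (star_alg invol). Qed.

Lemma mx_starM k (M N : 'M[A]_k) : mx_star (M *m N) = mx_star N *m mx_star M.
Proof.
apply/matrixP => i j; rewrite !mxE (star_sum invol); apply: eq_bigr => l _.
by rewrite !mxE (starM invol).
Qed.

Lemma alg_mx_const_coef k l (V : 'M[A]_(k, l)) : (forall i j, deg_le 0 (V i j)) ->
  V = alg_mx (map_mx const_coef V).
Proof. by move=> V0; apply/matrixP => i j; rewrite !mxE {1}(deg_le0_scalar (V0 i j)). Qed.

Lemma projectorP k (P : 'M[A]_k) : is_projector star P ->
  exists2 G : 'M[C]_k, is_orthoproj G & P = alg_mx G.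
Proof.
move=> P_proj; have PE := alg_mx_const_coef (projector_entries_deg_le0 P_proj).
case: P_proj => PP PS; exists (map_mx const_coef P) => //; split; apply: alg_mx_inj.
  by rewrite map_mxM -PE PP.
by rewrite -mx_star_alg -PE PS.
Qed.

Lemma alg_mx_projector k (G : 'M[C]_k) : is_orthoproj G -> is_projector star (alg_mx G).
Proof. by move=> [GG Gh]; split; rewrite ?mx_star_alg -?map_mxM ?GG ?Gh. Qed.

Lemma pad_alg_mx N k (G : 'M[C]_k) : pad N (alg_mx G) = alg_mx (pad_mx N G).
Proof.
apply/matrixP => i j; rewrite /pad mxE [RHS]mxE /pad_mx -mulmxA embed_mxE.
have -> : G *m (embed_mx N k)^T = (embed_mx N k *m G^T)^T by rewrite trmx_mul trmxK.
case: (insub (val i)) => [i'|]; last by rewrite rmorph0.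
rewrite mxE embed_mxE; case: (insub (val j)) => [j'|]; last by rewrite rmorph0.
by rewrite !mxE.
Qed.

(* [V := U *m alg_mx H] is a partial isometry from the range of [H] onto the
   range of [G]; [V] is scalar because [V *m mx_star V] is. *)
Lemma unitary_conj_mxrank N (U : 'M[A]_N) (G H : 'M[C]_N) :
  is_orthoproj G -> is_orthoproj H -> Defs.is_unitary star U ->
  alg_mx G = U *m alg_mx H *m mx_star U -> \rank G = \rank H.
Proof.
move=> [GG Gh] [HH Hh] [UU UU'] GUH; pose V := U *m alg_mx H.
have VV : V *m mx_star V = alg_mx G.
  by rewrite /V mx_starM mx_star_alg Hh GUH !mulmxA -(mulmxA U) -map_mxM HH.
have VV' : mx_star V *m V = alg_mx H.
  by rewrite /V mx_starM mx_star_alg Hh -!mulmxA (mulmxA (mx_star U)) UU' mul1mx -map_mxM HH.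
have VH : V *m alg_mx H = V by rewrite /V -mulmxA -map_mxM HH.
have GV : alg_mx G *m V = V.
  by rewrite /V GUH -!mulmxA (mulmxA (mx_star U)) UU' mul1mx -map_mxM HH.
have VE : V = alg_mx (map_mx const_coef V).
  apply/alg_mx_const_coef/entries_deg_le0_of_row_hsq => i d _.
  have -> : \sum_j V i j * star (V i j) = (V *m mx_star V) i i.
    by rewrite mxE; apply: eq_bigr => j _; rewrite !mxE.
  by rewrite VV mxE; apply: deg_le_alg.
move: VV VV' VH GV; rewrite VE mx_star_alg -!map_mxM; move: (map_mx const_coef V) => W.
move=> /alg_mx_inj WW /alg_mx_inj W'W /alg_mx_inj WH /alg_mx_inj GW.
exact: mxrank_partial_isometry WW GW W'W WH.
Qed.

Lemma proj_equiv_mxrank k l (G : 'M[C]_k) (H : 'M[C]_l) :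
  is_orthoproj G -> is_orthoproj H -> proj_equiv star (alg_mx G) (alg_mx H) ->
  \rank G = \rank H.
Proof.
move=> G_proj H_proj [N [U [kN lN U_unitary GUH]]].
rewrite -(mxrank_pad_mx G kN) -(mxrank_pad_mx H lN).
apply: unitary_conj_mxrank U_unitary _; try exact: pad_mx_orthoproj.
by rewrite -!pad_alg_mx.
Qed.

Lemma mxrank_proj_equiv k l (G : 'M[C]_k) (H : 'M[C]_l) :
  is_orthoproj G -> is_orthoproj H -> \rank G = \rank H ->
  proj_equiv star (alg_mx G) (alg_mx H).
Proof.
move=> G_proj H_proj rGH; have [kN lN] := (leq_addr l k, leq_addl k l).
have rGH' : \rank (pad_mx (k + l) G) = \rank (pad_mx (k + l) H).
  by rewrite !mxrank_pad_mx.
have [W W_unitary GWH] :=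
  orthoproj_unitary_conj (pad_mx_orthoproj kN G_proj) (pad_mx_orthoproj lN H_proj) rGH'.
exists (k + l)%N, (alg_mx W); split => //.
  split; rewrite mx_star_alg -map_mxM ?(unitarymxP W_unitary) ?map_mx1 //.
  by rewrite (mulmx1C (unitarymxP W_unitary)) map_mx1.
by rewrite !pad_alg_mx GWH !map_mxM mx_star_alg.
Qed.

Lemma dsum_alg_mx k l (G : 'M[C]_k) (H : 'M[C]_l) :
  dsum (alg_mx G) (alg_mx H) = alg_mx (block_mx G 0 0 H).
Proof. by rewrite /dsum map_block_mx !map_mx0. Qed.

Lemma K0_rel_mxrank k l k' l' (G : 'M[C]_k) (H : 'M[C]_l) (G' : 'M[C]_k') (H' : 'M[C]_l') :
  is_orthoproj G -> is_orthoproj H -> is_orthoproj G' -> is_orthoproj H' ->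
  K0_rel star (alg_mx G) (alg_mx H) (alg_mx G') (alg_mx H') <->
  (\rank G + \rank H' = \rank G' + \rank H)%N.
Proof.
move=> G_proj H_proj G'_proj H'_proj; split.
  move=> [r [_ [/projectorP [R R_proj ->]]]]; rewrite !dsum_alg_mx.
  move/(proj_equiv_mxrank (block_orthoproj (block_orthoproj G_proj H'_proj) R_proj)
                          (block_orthoproj (block_orthoproj G'_proj H_proj) R_proj)).
  by rewrite !rank_diag_block_mx => /eqP; rewrite eqn_add2r => /eqP.
move=> rank_eq; exists 0%N, 0; split; first by split; apply/matrixP => -[].
rewrite -(map_mx0 (in_alg A)) !dsum_alg_mx; apply: mxrank_proj_equiv.
- exact: block_orthoproj (block_orthoproj G_proj H'_proj) (orthoproj0 _).
- exact: block_orthoproj (block_orthoproj G'_proj H_proj) (orthoproj0 _).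
by rewrite !rank_diag_block_mx rank_eq.
Qed.

Lemma K0_iso_mxrank : K0_iso_int star.
Proof.
exists (fun k (P : 'M[A]_k) => (\rank (map_mx const_coef P))%:Z); split.
- move=> k l P Q /projectorP [G _ ->] /projectorP [H _ ->].
  by rewrite dsum_alg_mx !alg_mxK rank_diag_block_mx.
- move=> k l k' l' P Q P' Q' /projectorP [G G_proj ->] /projectorP [H H_proj ->].
  move=> /projectorP [G' G'_proj ->] /projectorP [H' H'_proj ->]; rewrite !alg_mxK.
  rewrite (K0_rel_mxrank G_proj H_proj G'_proj H'_proj); lia.
move=> [] n; [exists n, 0%N | exists 0%N, n.+1]; exists 1%:M, 1%:M;
  rewrite -!(map_mx1 (in_alg A)) !alg_mxK !mxrank1;
  split; try exact/alg_mx_projector/orthoproj1.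
- by rewrite subr0.
- by rewrite sub0r NegzE.
Qed.

End Presentation.

Local Open Scope complex_scope.

Theorem corollary2p5 (n : nat) (th : 'M[RR]_(2 * n)) (A : algType C)
    (star : A -> A) (x : 'I_(2 * n) -> A) :
  admissible th -> is_Moyal_algebra th star x ->
  (forall k (P : 'M[A]_k), is_projector star P ->
     forall i j, exists c : C, P i j = c%:A) /\
  K0_iso_int star.
Proof.
move=> _ [invol x_sa comm basis]; split; last exact: (K0_iso_mxrank comm invol x_sa basis).
move=> k P P_proj i j; exists (const_coef x (P i j)).
exact/(deg_le0_scalar basis)/(projector_entries_deg_le0 comm invol x_sa basis P_proj).
Qed.
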